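(* Let $A$, $b$, $H$, $w_0$, $x_0=A^Tw_0$, and the sequences $r_k=b-Ax_k$, $x_k$ be as in the first-order CTA iteration in the context, and assume $Hr_k\ne0$ for all $k\ge0$ (so the sequences are infinite). (1) If $\operatorname{rank}(A)=m$, then $x_k$ converges to a solution of $Ax=b$; if $H=AA^T$, it converges to the minimum-norm solution of $Ax=b$. (2) $A^Tr_k\to0$. (3) If $Ax=b$ is solvable and $\{x_k\}$ is bounded, then $r_k\to0$ and every accumulation point of $\{x_k\}$ solves $Ax=b$. (4) If $Ax=b$ is solvable and $H=AA^T$, then for every $k$ there is $w_k\in\mathbb{R}^m$ with $x_k=A^Tw_k$; if $\{w_k\}$ is bounded, then $x_k$ converges to the minimum-norm solution $x_*$ of $Ax=b$.
   Context: $A\in\mathbb{R}^{m\times n}$, $b\in\mathbb{R}^m$; $H=AA^T$, or $H=A$ when $A$ is square symmetric positive semidefinite. For $r$ with $Hr\ne0$, $\alpha_{1,1}(r)=r^THr/r^TH^2r$ and $F_1(r)=r-\alpha_{1,1}(r)Hr$. Given $w_0\in\mathbb{R}^m$: $x_0=A^Tw_0$, $r_0=b-Ax_0$, $r_k=F_1(r_{k-1})$, and $x_k=x_{k-1}+\alpha_{1,1}(r_{k-1})r_{k-1}$ if $H=A$, $x_k=x_{k-1}+\alpha_{1,1}(r_{k-1})A^Tr_{k-1}$ if $H=AA^T$ (so $r_k=b-Ax_k$). *)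

From HB Require Import structures.
From mathcomp Require Import all_boot all_order all_algebra.
From mathcomp Require Import all_classical all_reals all_analysis.
Set Implicit Arguments. Unset Strict Implicit. Unset Printing Implicit Defensive.
Import Order.TTheory GRing.Theory Num.Theory.
Import numFieldNormedType.Exports.
Local Open Scope ring_scope.

Definition alpha11 (R : realType) (m : nat) (H : 'M[R]_m) (r : 'cV[R]_m) : R :=
  (r^T *m H *m r) 0 0 / (r^T *m (H *m H) *m r) 0 0.

Definition F1 (R : realType) (m : nat) (H : 'M[R]_m) (r : 'cV[R]_m) : 'cV[R]_m :=
  r - alpha11 H r *: (H *m r).

(* Generic first-order CTA iteration: the pair (x_k, r_k), with
   x_k = x_{k-1} + alpha_{1,1}(r_{k-1}) D r_{k-1},  r_k = F_1(r_{k-1}),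
   where D = A^T when H = A A^T and D = I when H = A (square case). *)
Fixpoint cta (R : realType) (m n : nat) (H : 'M[R]_m) (D : 'M[R]_(n, m))
    (x0 : 'cV[R]_n) (r0 : 'cV[R]_m) (k : nat) : 'cV[R]_n * 'cV[R]_m :=
  match k with
  | 0 => (x0, r0)
  | k'.+1 => let: (x, r) := cta H D x0 r0 k' in
             (x + alpha11 H r *: (D *m r), F1 H r)
  end.

Definition cta_AAT (R : realType) (m n : nat) (A : 'M[R]_(m, n)) (b w0 : 'cV[R]_m)
    (k : nat) : 'cV[R]_n * 'cV[R]_m :=
  cta (A *m A^T) A^T (A^T *m w0) (b - A *m (A^T *m w0)) k.

Definition cta_A (R : realType) (n : nat) (A : 'M[R]_n) (b w0 : 'cV[R]_n)
    (k : nat) : 'cV[R]_n * 'cV[R]_n :=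
  cta A 1%:M (A^T *m w0) (b - A *m (A^T *m w0)) k.

Definition psd_sym (R : realType) (n : nat) (A : 'M[R]_n) : Prop :=
  A^T = A /\ forall v : 'cV[R]_n, 0 <= (v^T *m A *m v) 0 0.

Definition eucl2 (R : realType) (n : nat) (v : 'cV[R]_n) : R :=
  \sum_(i < n) v i 0 ^+ 2.

Definition is_min_norm_sol (R : realType) (m n : nat) (A : 'M[R]_(m, n))
    (b : 'cV[R]_m) (xs : 'cV[R]_n) : Prop :=
  A *m xs = b /\ forall y, A *m y = b -> eucl2 xs <= eucl2 y.

Definition bounded_seq (R : realType) (p q : nat) (u : nat -> 'M[R]_(p, q)) : Prop :=
  exists M : R, forall k, `|u k| <= M.

From HB Require Import structures.
From mathcomp Require Import all_boot all_order all_algebra.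
From mathcomp Require Import all_classical all_reals all_analysis.
From mathcomp Require Import ring lra.
Import Order.TTheory GRing.Theory Num.Theory.
Import numFieldNormedType.Exports.
Local Open Scope ring_scope.
Local Open Scope classical_set_scope.

(* Write <u, v> = u^T v, and |M| for the max-norm of a matrix.  Both cases of
   the theorem are instances of one scheme: x_{k+1} = x_k + a_k D r_k,
   r_{k+1} = r_k - a_k H r_k, with H symmetric positive semidefinite, A D = H
   and a_k = <r_k, H r_k> / <H r_k, H r_k>  (D = A^T or D = 1).
   1. Invariants: A x_k + r_k = A x_0 + r_0 = b, and x_k stays in range D.
   2. Energy identity: |r_{k+1}|^2 = |r_k|^2 - <r_k, H r_k>^2 / |H r_k|^2, so
      |r_k|^2 decreases and its consecutive differences tend to 0.
   3. Cauchy-Schwarz for the semi-inner product <., H .> gives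
      |H r|^2 <= K <r, H r>; with 2. this yields <r_k, H r_k> -> 0 and
      H r_k -> 0.  Since <r, A A^T r> = |A^T r|^2, this is part (2).
   4. If A y = b then |r_k|^2 = <y - x_k, A^T r_k>: bounded iterates force
      r_k -> 0, and by continuity of u |-> A u cluster points solve (part 3).
   5. A solution of the form A^T v has minimum norm.  Full rank makes H
      invertible, so r_k -> 0 and x_k = N (b - r_k) converges (part 1); bounded
      w_k with x_k = A^T w_k give |x_k - A^T v|^2 = -<w_k - v, r_k> -> 0 (4). *)

Section MaxNorm.
Context {R : realType}.

Lemma mx_norm_entry {p q : nat} (M : 'M[R]_(p, q)) i j : `|M i j| <= `|M|.
Proof.
rewrite [leRHS]/Num.Def.normr /= mx_normrE.
by apply/bigmax_geP; right => /=; exists (i, j).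
Qed.

Lemma mx_norm_le {p q : nat} (M : 'M[R]_(p, q)) (c : R) :
  0 <= c -> (forall i j, `|M i j| <= c) -> `|M| <= c.
Proof.
move=> c0 Mc; rewrite [leLHS]/Num.Def.normr /= mx_normrE.
by apply: bigmax_le => // -[i j] _; apply: Mc.
Qed.

Lemma mx_norm_mul {p q s : nat} (M : 'M[R]_(p, q)) (N : 'M[R]_(q, s)) :
  `|M *m N| <= q%:R * `|M| * `|N|.
Proof.
apply: mx_norm_le; first by rewrite !mulr_ge0.
move=> i j; rewrite mxE; apply: le_trans (ler_norm_sum _ _ _) _.
have -> : q%:R * `|M| * `|N| = \sum_(k < q) `|M| * `|N|.
  by rewrite sumr_const card_ord -mulrA mulr_natl.
by apply: ler_sum => k _; rewrite normrM ler_pM ?mx_norm_entry.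
Qed.

Lemma mulmx_continuous {p q s : nat} (M : 'M[R]_(p, q)) :
  continuous (fun u : 'M[R]_(q, s) => M *m u).
Proof.
apply: (@bounded_linear_continuous _ _ _ (mulmx M)); apply/linear_boundedP.
near=> c => u; apply: le_trans (mx_norm_mul M u) _.
apply: ler_wpM2r; first exact: normr_ge0.
by near: c; apply: nbhs_pinfty_ge; rewrite realE mulr_ge0.
Unshelve. all: end_near.
Qed.

Lemma mulmx_cvg {p q s : nat} (M : 'M[R]_(p, q)) {u : nat -> 'M[R]_(q, s)} {l} :
  u @ \oo --> l -> (fun k => M *m u k) @ \oo --> M *m l.
Proof. exact: (continuous_cvg _ (mulmx_continuous M l)). Qed.

Lemma bounded_mulmx {p q s : nat} (M : 'M[R]_(p, q)) (u : nat -> 'M[R]_(q, s)) :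
  bounded_seq u -> bounded_seq (fun k => M *m u k).
Proof.
move=> [c uc]; exists (q%:R * `|M| * c) => k.
by apply: le_trans (mx_norm_mul _ _) _; rewrite ler_wpM2l ?mulr_ge0.
Qed.

End MaxNorm.

Section Dot.
Context {R : realType} {m : nat}.
Implicit Types u v w : 'cV[R]_m.

Definition dot u v : R := (u^T *m v) 0 0.

Lemma dotE u v : dot u v = \sum_i u i 0 * v i 0.
Proof. by rewrite /dot mxE; apply: eq_bigr => i _; rewrite mxE. Qed.

Lemma dotC u v : dot u v = dot v u.
Proof. by rewrite !dotE; apply: eq_bigr => i _; rewrite mulrC. Qed.

Lemma dotDl u v w : dot (u + v) w = dot u w + dot v w.
Proof. by rewrite !dotE -big_split; apply: eq_bigr => i _; rewrite !mxE mulrDl. Qed.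

Lemma dotNl u w : dot (- u) w = - dot u w.
Proof. by rewrite !dotE -sumrN; apply: eq_bigr => i _; rewrite !mxE mulNr. Qed.

Lemma dotBl u v w : dot (u - v) w = dot u w - dot v w.
Proof. by rewrite dotDl dotNl. Qed.

Lemma dotZl (a : R) u w : dot (a *: u) w = a * dot u w.
Proof. by rewrite !dotE mulr_sumr; apply: eq_bigr => i _; rewrite !mxE mulrA. Qed.

Lemma dotDr u v w : dot w (u + v) = dot w u + dot w v.
Proof. by rewrite dotC dotDl dotC (dotC v). Qed.

Lemma dotBr u v w : dot w (u - v) = dot w u - dot w v.
Proof. by rewrite dotC dotBl dotC (dotC v). Qed.

Lemma dotZr (a : R) u w : dot w (a *: u) = a * dot w u.
Proof. by rewrite dotC dotZl dotC. Qed.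

Lemma dot0r u : dot u 0 = 0.
Proof. by rewrite dotE big1 // => i _; rewrite mxE mulr0. Qed.

Lemma dot_ge0 u : 0 <= dot u u.
Proof. by rewrite dotE sumr_ge0 // => i _; rewrite -expr2 sqr_ge0. Qed.

Lemma dot_eq0 u : dot u u = 0 -> u = 0.
Proof.
rewrite dotE => /eqP; rewrite psumr_eq0; last by move=> i _; rewrite -expr2 sqr_ge0.
move=> /allP u0; apply/matrixP => i j; rewrite (ord1 j) mxE.
by have := u0 i (mem_index_enum _); rewrite /= -expr2 sqrf_eq0 => /eqP.
Qed.

Lemma dot_gt0 u : u != 0 -> 0 < dot u u.
Proof.
by move=> u0; rewrite lt_def dot_ge0 andbT; apply: contra u0 => /eqP/dot_eq0->.
Qed.

Lemma normsq_le_dot u : `|u| ^+ 2 <= dot u u.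
Proof.
have entry_le i : `|u i 0| <= Num.sqrt (dot u u).
  rewrite -sqrtr_sqr ler_sqrt ?dot_ge0 // dotE (bigD1 i) //= -expr2.
  by rewrite -[leLHS]addr0 lerD2l sumr_ge0 // => k _; rewrite -expr2 sqr_ge0.
have norm_le : `|u| <= Num.sqrt (dot u u).
  by apply: mx_norm_le => // i j; rewrite (ord1 j).
by rewrite -[leRHS](sqr_sqrtr (dot_ge0 u)) lerXn2r // ?nnegrE.
Qed.

Lemma dot_le u v : dot u v <= m%:R * `|u| * `|v|.
Proof.
apply: le_trans (ler_norm _) _; apply: le_trans (mx_norm_entry (u^T *m v) 0 0) _.
apply: le_trans (mx_norm_mul _ _) _; rewrite ler_wpM2r // ler_wpM2l //.
by apply: mx_norm_le => // i j; rewrite mxE mx_norm_entry.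
Qed.

End Dot.

Lemma dot_mx {R : realType} {p q : nat} (M : 'M[R]_(p, q)) u v :
  dot (M *m u) v = dot u (M^T *m v).
Proof. by rewrite /dot trmx_mul mulmxA. Qed.

Lemma eucl2_dot {R : realType} {m : nat} (v : 'cV[R]_m) : eucl2 v = dot v v.
Proof. by rewrite /eucl2 dotE; apply: eq_bigr => i _; rewrite expr2. Qed.

Section Limits.
Context {R : realType}.

Lemma cvg0_le {V : normedModType R} (f : nat -> V) (g : nat -> R) (C : R) :
  (forall k, `|f k| <= C * g k) -> g @ \oo --> (0 : R) -> f @ \oo --> (0 : V).
Proof.
move=> fg g0; apply: norm_cvg0.
apply: (@squeeze_cvgr _ _ _ _ (fun=> 0) (fun k => C * g k)).
- by near=> k; rewrite normr_ge0 fg.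
- exact: cvg_cst.
- by rewrite -(mulr0 C); apply: cvgM => //; exact: cvg_cst.
Unshelve. all: end_near.
Qed.

Lemma cvg_sq0 (f : nat -> R) :
  (forall k, 0 <= f k) -> (fun k => f k ^+ 2) @ \oo --> (0 : R) ->
  f @ \oo --> (0 : R).
Proof.
move=> f0 /cvgrPdist_lt f2; apply/cvgrPdist_lt => e e0.
apply: filterS (f2 (e ^+ 2) (exprn_gt0 _ e0)) => k.
rewrite !sub0r !normrN !ger0_norm ?sqr_ge0 ?f0 // => fe.
by have := f0 k; rewrite !expr2 in fe *; nra.
Qed.

Lemma sq_bound_cvg {p q : nat} {f : nat -> 'M[R]_(p, q)} {g : nat -> R} {C : R} :
  (forall k, `|f k| ^+ 2 <= C * g k) -> g @ \oo --> (0 : R) ->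
  f @ \oo --> (0 : 'M[R]_(p, q)).
Proof.
move=> fg g0; apply: norm_cvg0; apply: cvg_sq0 => //.
by apply: (@cvg0_le R^o _ _ C) g0 => k; rewrite ger0_norm ?sqr_ge0.
Qed.

Lemma decr_diff0 (s : nat -> R) :
  (forall k, s k.+1 <= s k) -> (forall k, 0 <= s k) ->
  (fun k => s k - s k.+1) @ \oo --> (0 : R).
Proof.
move=> dec pos.
have nd : nonincreasing_seq s by apply/nonincreasing_seqP.
have lb : has_lbound (range s) by exists 0 => _ [k _ <-].
have s_cvg := nonincreasing_cvgn nd lb.
by rewrite -(subrr (inf (s @` setT))); apply: cvgB => //; rewrite cvg_shiftS.
Qed.

End Limits.

Lemma cluster_image {T U : topologicalType} {F : set_system T} {f : T -> U} {p : T} :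
  {for p, continuous f} -> cluster F p -> cluster (f @ F) (f p).
Proof.
move=> fc Fp A B FA /fc Bp; have [t [At Bt]] := Fp _ _ FA Bp.
by exists (f t).
Qed.

Lemma cluster_sol {R : realType} {m n : nat} (A : 'M[R]_(m, n)) (b : 'cV[R]_m)
    (x : nat -> 'cV[R]_n) :
  (fun k => A *m x k) @ \oo --> b ->
  forall p, cluster (x @ \oo) p -> A *m p = b.
Proof.
move=> Axb p /(cluster_image (mulmx_continuous A p)) /(cvg_cluster Axb).
by move/norm_hausdorff.
Qed.

Lemma quadratic_discr {R : realType} (a b c : R) :
  (forall t, 0 <= a - 2 * b * t + c * t ^+ 2) -> 0 <= c -> b ^+ 2 <= a * c.
Proof.
move=> nonneg c0; have [c_eq0|cn0] := eqVneq c 0.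
  subst c; rewrite mulr0; have [->|bn0] := eqVneq b 0; first by rewrite expr0n.
  have := nonneg ((a + 1) / (2 * b)).
  have -> : a - 2 * b * ((a + 1) / (2 * b)) + 0 * ((a + 1) / (2 * b)) ^+ 2 = -1.
    by field.
  by rewrite ler0N1.
have := nonneg (b / c).
have -> : a - 2 * b * (b / c) + c * (b / c) ^+ 2 = (a * c - b ^+ 2) / c by field.
by rewrite pmulr_lge0 ?subr_ge0 // invr_gt0 lt_def cn0.
Qed.

Definition quad_bound {R : realType} {m : nat} (H : 'M[R]_m) : R :=
  m%:R * m%:R * `|H|.

Lemma quad_le {R : realType} {m : nat} (H : 'M[R]_m) (u : 'cV[R]_m) :
  dot u (H *m u) <= quad_bound H * dot u u.
Proof.
apply: le_trans (dot_le _ _) _.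
apply: (@le_trans _ _ (m%:R * `|u| * (m%:R * `|H| * `|u|))).
  by rewrite ler_wpM2l ?mulr_ge0 // mx_norm_mul.
have -> : m%:R * `|u| * (m%:R * `|H| * `|u|) = quad_bound H * `|u| ^+ 2.
  by rewrite /quad_bound expr2; ring.
by rewrite ler_wpM2l ?normsq_le_dot // /quad_bound !mulr_ge0.
Qed.

(* For a symmetric positive semidefinite H, |H r|^2 <= K <r, H r>: the
   Cauchy-Schwarz inequality for <., H .> applied to r and H r. *)
Section PSD.
Context {R : realType} {m : nat} {H : 'M[R]_m}.
Hypothesis Hsym : H^T = H.
Hypothesis Hpsd : forall v : 'cV[R]_m, 0 <= dot v (H *m v).

Lemma dot_quad (u v : 'cV[R]_m) (t : R) :
  dot (u - t *: v) (H *m (u - t *: v)) =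
  dot u (H *m u) - 2 * t * dot u (H *m v) + t ^+ 2 * dot v (H *m v).
Proof.
have symH : dot v (H *m u) = dot u (H *m v) by rewrite dotC dot_mx Hsym.
by rewrite mulmxBr -scalemxAr dotBl !dotBr !dotZl !dotZr symH; ring.
Qed.

Lemma psd_image_le (r : 'cV[R]_m) :
  dot (H *m r) (H *m r) <= quad_bound H * dot r (H *m r).
Proof.
set c := dot (H *m r) (H *m r); set a := dot r (H *m r).
have [->|cn0] := eqVneq c 0; first by rewrite mulr_ge0 ?Hpsd // !mulr_ge0.
have cpos : 0 < c by rewrite lt_def cn0 dot_ge0.
have cs : c ^+ 2 <= dot (H *m r) (H *m (H *m r)) * a.
  apply: quadratic_discr; last exact: Hpsd.
  move=> t; have := Hpsd (H *m r - t *: r); rewrite dot_quad -/c -/a.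
  by rewrite [2 * t * c]mulrAC [t ^+ 2 * a]mulrC.
have : c * c <= c * (quad_bound H * a).
  apply: le_trans (_ : _ <= dot (H *m r) (H *m (H *m r)) * a) _.
    by rewrite -expr2.
  by rewrite mulrA [c * _]mulrC ler_wpM2r ?Hpsd ?quad_le.
by rewrite ler_pM2l.
Qed.

End PSD.

Lemma ctaS {R : realType} {m n : nat} (H : 'M[R]_m) (D : 'M[R]_(n, m)) x0 r0 k :
  cta H D x0 r0 k.+1 =
  ((cta H D x0 r0 k).1 + alpha11 H (cta H D x0 r0 k).2 *: (D *m (cta H D x0 r0 k).2),
   F1 H (cta H D x0 r0 k).2).
Proof. by rewrite /=; case: (cta H D x0 r0 k). Qed.

Lemma cta_inv {R : realType} {m n : nat} (A : 'M[R]_(m, n)) (H : 'M[R]_m)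
    (D : 'M[R]_(n, m)) x0 r0 k :
  A *m D = H -> A *m (cta H D x0 r0 k).1 + (cta H D x0 r0 k).2 = A *m x0 + r0.
Proof.
move=> AD; elim: k => [//|k IH]; rewrite ctaS /= -IH /F1.
rewrite mulmxDr -scalemxAr mulmxA AD -addrA.
by congr (_ + _); rewrite addrC subrK.
Qed.

Lemma cta_range {R : realType} {m n : nat} (H : 'M[R]_m) (D : 'M[R]_(n, m)) w0 r0 k :
  exists w, (cta H D (D *m w0) r0 k).1 = D *m w.
Proof.
elim: k => [|k [w IH]]; first by exists w0.
set r := (cta H D (D *m w0) r0 k).2.
by rewrite ctaS /= IH -/r; exists (w + alpha11 H r *: r); rewrite mulmxDr scalemxAr.
Qed.

Section Residual.
Context {R : realType} {m n : nat} {H : 'M[R]_m}.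
Hypothesis Hsym : H^T = H.
Hypothesis Hpsd : forall v : 'cV[R]_m, 0 <= dot v (H *m v).
Context {D : 'M[R]_(n, m)} {x0 : 'cV[R]_n} {r0 : 'cV[R]_m}.
Let r k := (cta H D x0 r0 k).2.
Hypothesis Hnz : forall k, H *m r k != 0.

Lemma alphaE (u : 'cV[R]_m) :
  alpha11 H u = dot u (H *m u) / dot (H *m u) (H *m u).
Proof. by rewrite /alpha11 /dot mulmxA trmx_mul Hsym !mulmxA. Qed.

Lemma resid_step k :
  dot (r k.+1) (r k.+1) =
  dot (r k) (r k) - dot (r k) (H *m r k) ^+ 2 / dot (H *m r k) (H *m r k).
Proof.
have cn0 : dot (H *m r k) (H *m r k) != 0 by rewrite gt_eqF ?dot_gt0.
rewrite /r ctaS /= -/(r k) /F1 alphaE dotBl !dotBr !dotZl !dotZr.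
by rewrite [dot (H *m r k) (r k)]dotC; field.
Qed.

Lemma resid_dec k : dot (r k.+1) (r k.+1) <= dot (r k) (r k).
Proof. by rewrite resid_step gerBl divr_ge0 ?sqr_ge0 ?dot_ge0. Qed.

(* <r_k, H r_k>^2 is at most K times the decrease of |r_k|^2, hence -> 0. *)
Lemma resid_energy_cvg0 : (fun k => dot (r k) (H *m r k)) @ \oo --> (0 : R).
Proof.
have diff0 := decr_diff0 _ resid_dec (fun k => dot_ge0 (r k)).
apply: (@cvg0_le _ R^o _ _ (quad_bound H)) diff0 => k.
rewrite resid_step opprB addrC subrK ger0_norm ?Hpsd //.
set a := dot (r k) (H *m r k); set c := dot (H *m r k) (H *m r k).
have cpos : 0 < c by apply: dot_gt0.
rewrite -(ler_pM2r cpos).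
have -> : quad_bound H * (a ^+ 2 / c) * c = a * (quad_bound H * a).
  by field; rewrite gt_eqF.
by rewrite ler_wpM2l ?Hpsd ?psd_image_le.
Qed.

Lemma resid_H_cvg0 : (fun k => H *m r k) @ \oo --> (0 : 'cV[R]_m).
Proof.
apply: (sq_bound_cvg (C := quad_bound H) _ resid_energy_cvg0) => k.
exact: le_trans (normsq_le_dot _) (psd_image_le Hsym Hpsd _).
Qed.

End Residual.

Lemma unit_cvg0 {R : realType} {p q : nat} {M : 'M[R]_p} {u : nat -> 'M[R]_(p, q)} :
  M \in unitmx -> (fun k => M *m u k) @ \oo --> (0 : 'M[R]_(p, q)) ->
  u @ \oo --> (0 : 'M[R]_(p, q)).
Proof.
move=> Mu Mu0; have -> : u = (fun k => invmx M *m (M *m u k)).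
  by apply: funext => k; rewrite mulKmx.
by have := mulmx_cvg (invmx M) Mu0; rewrite mulmx0.
Qed.

Lemma resid_param_cvg {R : realType} {m n : nat} (N : 'M[R]_(n, m)) (b : 'cV[R]_m)
    (x : nat -> 'cV[R]_n) (r : nat -> 'cV[R]_m) :
  (forall k, x k = N *m (b - r k)) -> r @ \oo --> (0 : 'cV[R]_m) ->
  x @ \oo --> N *m b.
Proof.
move=> xE r0; have -> : x = (fun k => N *m (b - r k)) by apply: funext.
by rewrite -[X in N *m X]subr0; apply: mulmx_cvg; apply: cvgB => //; exact: cvg_cst.
Qed.

(* rank (A A^T) = rank A, since no nonzero row of range A is orthogonal to
   all rows of A. *)
Lemma rank_AAT {R : realType} {m n : nat} (A : 'M[R]_(m, n)) :
  \rank (A *m A^T) = \rank A.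
Proof.
suff C0 : (A :&: kermx A^T)%MS = 0 :> 'M[R]_n.
  by have := mxrank_mul_ker A A^T; rewrite C0 mxrank0 addn0.
set C := (A :&: kermx A^T)%MS.
have /submxP [E CE] : (C <= A)%MS by apply: capmxSl.
have /sub_kermxP CAT : (C <= kermx A^T)%MS by apply: capmxSr.
have CCT : C *m C^T = 0 by rewrite [X in _ *m X^T]CE trmx_mul mulmxA CAT mul0mx.
apply/matrixP => i j; rewrite mxE.
have := congr1 (fun M : 'M[R]_n => M i i) CCT; rewrite !mxE => /eqP.
rewrite psumr_eq0; last by move=> k _; rewrite mxE -expr2 sqr_ge0.
move=> /allP /(_ j (mem_index_enum _)) /=.
by rewrite mxE -expr2 sqrf_eq0 => /eqP.
Qed.

Lemma AAT_range {R : realType} {m n : nat} {A : 'M[R]_(m, n)} {b : 'cV[R]_m} {y} :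
  A *m y = b -> exists v, A *m (A^T *m v) = b.
Proof.
move=> Ay.
have AAT_eq : (A *m A^T == A^T)%MS.
  by rewrite -(mxrank_leqif_eq (submxMl _ _)).2 rank_AAT mxrank_tr.
have /submxP [E bE] : (b^T <= A *m A^T)%MS.
  rewrite -Ay trmx_mul; apply: submx_trans (submxMl _ _) _.
  by case/andP: AAT_eq.
by exists E^T; rewrite mulmxA -[b]trmxK bE !trmx_mul trmxK.
Qed.

Lemma min_norm {R : realType} {m n : nat} (A : 'M[R]_(m, n)) b v :
  A *m (A^T *m v) = b -> is_min_norm_sol A b (A^T *m v).
Proof.
move=> Av; split=> // y Ay; rewrite !eucl2_dot.
set xs := A^T *m v; set d := y - xs.
have orth : dot xs d = 0 by rewrite /xs dot_mx trmxK mulmxBr Ay Av subrr dot0r.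
have -> : y = xs + d by rewrite addrC subrK.
clearbody d; rewrite dotDl !dotDr (dotC d xs) orth add0r addr0 lerDl.
exact: dot_ge0.
Qed.

Lemma bounded_solve {R : realType} {m n : nat} {A : 'M[R]_(m, n)} {b : 'cV[R]_m}
    {x : nat -> 'cV[R]_n} {r : nat -> 'cV[R]_m} :
  (forall k, A *m x k + r k = b) ->
  (fun k => A^T *m r k) @ \oo --> (0 : 'cV[R]_n) ->
  (exists y, A *m y = b) -> bounded_seq x ->
  r @ \oo --> (0 : 'cV[R]_m) /\ (forall p : 'cV[R]_n, cluster (x @ \oo) p -> A *m p = b).
Proof.
move=> inv ATr0 [y Ay] [M xM].
have r0 : r @ \oo --> (0 : 'cV[R]_m).
  apply: (sq_bound_cvg (C := n%:R * (`|y| + M)) _ ((norm_cvg0P _).2 ATr0)) => k.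
  apply: le_trans (normsq_le_dot _) _.
  have -> : dot (r k) (r k) = dot (y - x k) (A^T *m r k).
    by rewrite -dot_mx mulmxBr Ay -(inv k) addrC addKr.
  apply: le_trans (dot_le _ _) _; rewrite ler_wpM2r // ler_wpM2l //.
  by apply: le_trans (ler_normB _ _) _; rewrite lerD2l.
split=> //; apply: cluster_sol.
have -> : (fun k => A *m x k) = (fun k => b - r k).
  by apply: funext => k; rewrite -(inv k) addrK.
by rewrite -[X in _ --> X]subr0; apply: cvgB => //; exact: cvg_cst.
Qed.

Lemma min_norm_limit {R : realType} {m n : nat} {A : 'M[R]_(m, n)} {b : 'cV[R]_m}
    {x : nat -> 'cV[R]_n} {r w : nat -> 'cV[R]_m} {v : 'cV[R]_m} :
  (forall k, A *m x k + r k = b) -> A *m (A^T *m v) = b ->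
  (forall k, x k = A^T *m w k) -> bounded_seq w ->
  r @ \oo --> (0 : 'cV[R]_m) -> x @ \oo --> A^T *m v.
Proof.
move=> inv Av xw [M wM] r0; apply/subr_cvg0.
apply: (sq_bound_cvg (C := m%:R * (M + `|v|)) _ ((norm_cvg0P _).2 r0)) => k.
apply: le_trans (normsq_le_dot _) _.
have -> : dot (x k - A^T *m v) (x k - A^T *m v) = dot (w k - v) (- r k).
  by rewrite {1}xw -mulmxBr dot_mx trmxK mulmxBr Av -(inv k) opprD addrA subrr add0r.
apply: le_trans (dot_le _ _) _; rewrite normrN ler_wpM2r // ler_wpM2l //.
by apply: le_trans (ler_normB _ _) _; rewrite lerD2r.
Qed.

Lemma AAT_sym {R : realType} {m n : nat} (A : 'M[R]_(m, n)) :
  (A *m A^T)^T = A *m A^T.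
Proof. by rewrite trmx_mul trmxK. Qed.

Lemma AAT_quad {R : realType} {m n : nat} (A : 'M[R]_(m, n)) (v : 'cV[R]_m) :
  dot v ((A *m A^T) *m v) = dot (A^T *m v) (A^T *m v).
Proof. by rewrite -mulmxA dotC dot_mx. Qed.

Lemma AAT_psd {R : realType} {m n : nat} (A : 'M[R]_(m, n)) (v : 'cV[R]_m) :
  0 <= dot v ((A *m A^T) *m v).
Proof. by rewrite AAT_quad dot_ge0. Qed.

Section CTA_AAT.
Context {R : realType} {m n : nat}.
Variables (A : 'M[R]_(m, n)) (b w0 : 'cV[R]_m).
Let x k := (cta_AAT A b w0 k).1.
Let r k := (cta_AAT A b w0 k).2.
Hypothesis Hnz : forall k, (A *m A^T) *m r k != 0.

Lemma ctaAAT_inv k : A *m x k + r k = b.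
Proof. by rewrite /x /r /cta_AAT cta_inv // addrC subrK. Qed.

Lemma ctaAAT_range k : exists w, x k = A^T *m w.
Proof. exact: cta_range. Qed.

(* Part (2), since |A^T r_k|^2 = <r_k, A A^T r_k>. *)
Lemma ctaAAT_ATr_cvg0 : (fun k => A^T *m r k) @ \oo --> (0 : 'cV[R]_n).
Proof.
apply: (sq_bound_cvg (C := 1) _ (resid_energy_cvg0 (AAT_sym A) (AAT_psd A) Hnz)) => k.
by rewrite mul1r AAT_quad normsq_le_dot.
Qed.

(* Part (1): A A^T is invertible, so x_k = A^T (A A^T)^-1 (b - r_k) with
   r_k -> 0. *)
Lemma ctaAAT_full_rank :
  \rank A = m -> exists xs, is_min_norm_sol A b xs /\ x @ \oo --> xs.
Proof.
move=> rkA; have Hu : A *m A^T \in unitmx.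
  by rewrite -row_free_unit /row_free rank_AAT rkA.
have r0 : r @ \oo --> (0 : 'cV[R]_m).
  exact: unit_cvg0 Hu (resid_H_cvg0 (AAT_sym A) (AAT_psd A) Hnz).
exists (A^T *m (invmx (A *m A^T) *m b)); split.
  by apply: min_norm; rewrite mulmxA mulKVmx.
rewrite mulmxA; apply: resid_param_cvg r0 => k.
have [w xw] := ctaAAT_range k; rewrite xw -mulmxA; congr (_ *m _).
by rewrite -(ctaAAT_inv k) addrK xw [A *m (A^T *m w)]mulmxA mulKmx.
Qed.

Lemma ctaAAT_bounded_coeffs :
  (exists y, A *m y = b) ->
  forall w : nat -> 'cV[R]_m, (forall k, x k = A^T *m w k) -> bounded_seq w ->
  exists xs, is_min_norm_sol A b xs /\ x @ \oo --> xs.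
Proof.
move=> solvable w xw bw.
have bx : bounded_seq x.
  have -> : x = (fun k => A^T *m w k) by apply: funext.
  exact: bounded_mulmx.
have [r0 _] := bounded_solve ctaAAT_inv ctaAAT_ATr_cvg0 solvable bx.
have [y Ay] := solvable; have [v Av] := AAT_range Ay.
exists (A^T *m v); split; first exact: min_norm.
exact: min_norm_limit ctaAAT_inv Av xw bw r0.
Qed.

End CTA_AAT.

Lemma psd_sym_dot {R : realType} {n : nat} {A : 'M[R]_n} :
  psd_sym A -> forall v, 0 <= dot v (A *m v).
Proof. by move=> [_ Apsd] v; rewrite /dot mulmxA. Qed.

Section CTA_A.
Context {R : realType} {n : nat}.
Variables (A : 'M[R]_n) (b w0 : 'cV[R]_n).
Hypothesis Apsd : psd_sym A.
Let x k := (cta_A A b w0 k).1.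
Let r k := (cta_A A b w0 k).2.
Hypothesis Hnz : forall k, A *m r k != 0.

Lemma ctaA_inv k : A *m x k + r k = b.
Proof. by rewrite /x /r /cta_A cta_inv ?mulmx1 // addrC subrK. Qed.

(* Part (2): here A^T r_k = A r_k, which is H r_k. *)
Lemma ctaA_ATr_cvg0 : (fun k => A^T *m r k) @ \oo --> (0 : 'cV[R]_n).
Proof. rewrite Apsd.1; exact (resid_H_cvg0 Apsd.1 (psd_sym_dot Apsd) Hnz). Qed.

(* Part (1): x_k = A^-1 (b - r_k) with r_k -> 0. *)
Lemma ctaA_full_rank : \rank A = n -> exists xs, A *m xs = b /\ x @ \oo --> xs.
Proof.
move=> rkA; have Au : A \in unitmx by rewrite -row_free_unit /row_free rkA.
have r0 : r @ \oo --> (0 : 'cV[R]_n).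
  exact: unit_cvg0 Au (resid_H_cvg0 Apsd.1 (psd_sym_dot Apsd) Hnz).
exists (invmx A *m b); split; first by rewrite mulKVmx.
by apply: resid_param_cvg r0 => k; rewrite -(ctaA_inv k) addrK mulKmx.
Qed.

End CTA_A.

Theorem mainTheorem6 (R : realType) :
  (* Case H = A A^T *)
  (forall (m n : nat) (A : 'M[R]_(m, n)) (b w0 : 'cV[R]_m),
    let x := fun k => (cta_AAT A b w0 k).1 in
    let r := fun k => (cta_AAT A b w0 k).2 in
    (forall k, (A *m A^T) *m r k != 0) ->
    (* (1) *)
    (\rank A = m ->
       exists xs, is_min_norm_sol A b xs /\ x @ \oo --> xs) /\
    (* (2) *)
    ((fun k => A^T *m r k) @ \oo --> (0 : 'cV[R]_n)) /\
    (* (3) *)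
    ((exists y, A *m y = b) -> bounded_seq x ->
       r @ \oo --> (0 : 'cV[R]_m) /\
       (forall p : 'cV[R]_n, cluster (x @ \oo) p -> A *m p = b)) /\
    (* (4) *)
    ((exists y, A *m y = b) ->
       (forall k, exists w, x k = A^T *m w) /\
       (forall w : nat -> 'cV[R]_m, (forall k, x k = A^T *m w k) ->
          bounded_seq w ->
          exists xs, is_min_norm_sol A b xs /\ x @ \oo --> xs))) /\
  (* Case H = A, A square symmetric positive semidefinite *)
  (forall (n : nat) (A : 'M[R]_n) (b w0 : 'cV[R]_n),
    psd_sym A ->
    let x := fun k => (cta_A A b w0 k).1 in
    let r := fun k => (cta_A A b w0 k).2 in
    (forall k, A *m r k != 0) ->
    (* (1) *)
    (\rank A = n -> exists xs : 'cV[R]_n, A *m xs = b /\ x @ \oo --> xs) /\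
    (* (2) *)
    ((fun k => A^T *m r k) @ \oo --> (0 : 'cV[R]_n)) /\
    (* (3) *)
    ((exists y, A *m y = b) -> bounded_seq x ->
       r @ \oo --> (0 : 'cV[R]_n) /\
       (forall p : 'cV[R]_n, cluster (x @ \oo) p -> A *m p = b))).
Proof.
split.
- move=> m n A b w0 x r Hnz.
  have ATr0 := ctaAAT_ATr_cvg0 A b w0 Hnz.
  split; first exact: ctaAAT_full_rank.
  split; first exact: ATr0.
  split; first exact: bounded_solve (ctaAAT_inv A b w0) ATr0.
  by move=> solvable; split; [exact: ctaAAT_range | exact: ctaAAT_bounded_coeffs].
- move=> n A b w0 Apsd x r Hnz.
  have ATr0 := ctaA_ATr_cvg0 A b w0 Apsd Hnz.
  split; first exact: ctaA_full_rank Apsd Hnz.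
  by split; last exact: bounded_solve (ctaA_inv A b w0) ATr0.
Qed.
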